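(* Let $\mathcal{H}$ be a separable infinite dimensional Hilbert space and let $Z_1,Z_2$ be Read isometries on $\mathcal{H}$. Then for any non-zero $p\in\mathbb{N}$, the WOT-closed algebra $\mathfrak{Z}_p$ generated by $\{Z_\mu:\mu\in\mathbb{F}_2^+,\ |\mu|=p\}$ equals $B(\mathcal{H})$.
   Context: $\mathbb{F}_2^+$ is the free semigroup on $\{1,2\}$ (words in $1,2$), $|\mu|$ the length of a word, and $Z_\mu=Z_{i_1}\cdots Z_{i_n}$ for $\mu=i_1\cdots i_n$. Read isometries are isometries $Z_1,Z_2$ on $\mathcal{H}$ with $Z_1Z_1^*+Z_2Z_2^*=I$, constructed by Read (and streamlined by Davidson), with the property that there exist orthonormal bases $\{h_j\}_{j\in\mathbb{N}}$, $\{g_i\}_{i\in\mathbb{N}}$ of $\mathcal{H}$ and operators $S_{i,j,k}\in\operatorname{span}\{Z_w: w\in\mathbb{F}_2^+,\ |w|=2^k\}$ such that for each $i,j$, $S_{i,j,k}\to g_i\otimes h_j^*$ in the WOT as $k\to\infty$, where $g\otimes h^*$ denotes the rank one operator $\xi\mapsto\langle\xi,h\rangle g$. *)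

(* A complex Hilbert space is an lmodType over R[i] (R : realType, the reals)
   together with an inner product satisfying the usual axioms and completeness. *)
From mathcomp Require Import all_boot all_algebra.
From mathcomp Require Import complex.
From mathcomp Require Import reals.
Set Implicit Arguments. Unset Strict Implicit. Unset Printing Implicit Defensive.
Import GRing.Theory Num.Theory.
Local Open Scope ring_scope.
Local Open Scope complex_scope.

Section HilbertDefs.
Variables (R : realType) (H : lmodType R[i]) (ip : H -> H -> R[i]).

Definition inner_product_axioms : Prop :=
  [/\ (forall (a : R[i]) (x y z : H), ip (a *: x + y) z = a * ip x z + ip y z),
      (forall x y : H, ip x y = (ip y x)^*),
      (forall x : H, 0 <= ip x x) &
      (forall x : H, ip x x = 0 -> x = 0)].

Definition hnorm (x : H) : R[i] := sqrtC (ip x x).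

Definition cauchy_seq (u : nat -> H) : Prop :=
  forall e : R[i], 0 < e -> exists N : nat,
    forall m n : nat, (N <= m)%N -> (N <= n)%N -> hnorm (u m - u n) < e.

Definition converges_to (u : nat -> H) (l : H) : Prop :=
  forall e : R[i], 0 < e -> exists N : nat,
    forall n : nat, (N <= n)%N -> hnorm (u n - l) < e.

Definition hilbert_space : Prop :=
  inner_product_axioms /\
  (forall u : nat -> H, cauchy_seq u -> exists l : H, converges_to u l).

Definition separable : Prop :=
  exists d : nat -> H, forall (x : H) (e : R[i]), 0 < e ->
    exists n : nat, hnorm (x - d n) < e.

Definition infinite_dimensional : Prop :=
  forall s : seq H, exists x : H,
    ~ exists c : nat -> R[i], x = \sum_(i < size s) c i *: s`_i.

Definition orthonormal_basis (e : nat -> H) : Prop :=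
  (forall i j : nat, ip (e i) (e j) = (i == j)%:R) /\
  (forall (x : H) (eps : R[i]), 0 < eps ->
     exists (n : nat) (c : nat -> R[i]),
       hnorm (x - \sum_(i < n) c i *: e i) < eps).

Definition bounded_linear (T : H -> H) : Prop :=
  (forall (a : R[i]) (x y : H), T (a *: x + y) = a *: T x + T y) /\
  (exists M : R[i], forall x : H, hnorm (T x) <= M * hnorm x).

Definition is_adjoint (T S : H -> H) : Prop :=
  forall x y : H, ip (T x) y = ip x (S y).

Definition isometry (T : H -> H) : Prop :=
  bounded_linear T /\ forall x y : H, ip (T x) (T y) = ip x y.

Definition rank_one (g h : H) : H -> H := fun xi => ip xi h *: g.

Definition wot_converges (S : nat -> H -> H) (T : H -> H) : Prop :=
  forall (x y : H) (e : R[i]), 0 < e -> exists N : nat,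
    forall k : nat, (N <= k)%N -> `|ip (S k x) y - ip (T x) y| < e.

Definition op_span (G : (H -> H) -> Prop) (T : H -> H) : Prop :=
  exists (s : seq (H -> H)) (c : nat -> R[i]),
    (forall i : nat, (i < size s)%N -> G (nth id s i)) /\
    T = (fun x => \sum_(i < size s) c i *: (nth id s i) x).

(* the (non-unital) algebra generated by G: span of finite non-empty products *)
Definition op_products (G : (H -> H) -> Prop) (T : H -> H) : Prop :=
  exists s : seq (H -> H), s <> [::] /\
    (forall i : nat, (i < size s)%N -> G (nth id s i)) /\
    T = foldr (fun f g => f \o g) id s.

Definition gen_algebra (G : (H -> H) -> Prop) : (H -> H) -> Prop :=
  op_span (op_products G).

(* WOT closure (inside B(H)) of a set of operators: every basic WOT
   neighbourhood of T meets A *)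
Definition wot_closure (A : (H -> H) -> Prop) (T : H -> H) : Prop :=
  bounded_linear T /\
  forall (s : seq (H * H)) (e : R[i]), 0 < e ->
    exists S : H -> H, A S /\
      forall xy : H * H, xy \in s -> 
        `|ip (T xy.1) xy.2 - ip (S xy.1) xy.2| < e.

(* words in the free semigroup on {1,2}: false = 1, true = 2;
   Z_mu = Z_{i1} ... Z_{in} for mu = i1 ... in *)
Definition Zword (Z1 Z2 : H -> H) (w : seq bool) : H -> H :=
  foldr (fun b f => (if b then Z2 else Z1) \o f) id w.

Definition read_isometries (Z1 Z2 : H -> H) : Prop :=
  isometry Z1 /\ isometry Z2 /\
  (exists Z1s Z2s : H -> H, is_adjoint Z1 Z1s /\ is_adjoint Z2 Z2s /\
     forall x : H, Z1 (Z1s x) + Z2 (Z2s x) = x) /\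
  exists (h g : nat -> H) (S : nat -> nat -> nat -> H -> H),
    orthonormal_basis h /\ orthonormal_basis g /\
    (forall i j k : nat,
       op_span (fun T => exists w : seq bool, size w = (2 ^ k)%N /\ T = Zword Z1 Z2 w)
               (S i j k)) /\
    (forall i j : nat, wot_converges (S i j) (rank_one (g i) (h j))).

End HilbertDefs.

(* Pick r such that p divides 2^k + r for infinitely many k (some residue of 2^k
   mod p recurs) and let V := Z_1^r, an isometry with adjoint V^*, so that
   T = (T V^* ) V.  The operator T V^* is a WOT-limit of its compressions
   sum_(a, b < N) <T V^* h_b, g_a> g_a (x) h_b^*, and (g_a (x) h_b^* ) V is the
   WOT-limit of S_(a,b,k) V along those k; S_(a,b,k) V lies in the span of words
   of length 2^k + r, i.e. of products of words of length p.  The WOT adherence of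
   a linear space of operators is again linear and WOT-closed, so it contains T. *)

From mathcomp Require Import all_boot all_order all_algebra.
From mathcomp Require Import complex.
From mathcomp Require Import reals.
From mathcomp Require Import ring.
From Stdlib Require Import FunctionalExtensionality Classical.
Set Implicit Arguments. Unset Strict Implicit. Unset Printing Implicit Defensive.
Import Order.POrderTheory GRing.Theory Num.Theory.
Local Open Scope ring_scope.
Local Open Scope complex_scope.

Lemma mulr_lt_of_lt_divD1 (F : numFieldType) (a b e : F) :
  0 <= a -> 0 <= b -> a < e / (b + 1) -> a * b < e.
Proof.
move=> a0 b0; rewrite ltr_pdivlMr ?ltr_wpDl //; apply: le_lt_trans.
by rewrite ler_wpM2l // lerDl.
Qed.

Definition eventually (P : nat -> Prop) : Prop :=
  exists N, forall n, (N <= n)%N -> P n.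

Definition frequently (P : nat -> Prop) : Prop :=
  forall N, exists2 n, (N <= n)%N & P n.

Lemma eventually_and (P Q : nat -> Prop) :
  eventually P -> eventually Q -> eventually (fun n => P n /\ Q n).
Proof.
move=> [N1 hP] [N2 hQ]; exists (maxn N1 N2) => n; rewrite geq_max => /andP[h1 h2].
by split; [apply: hP | apply: hQ].
Qed.

Lemma eventually_all (T : eqType) (s : seq T) (Q : T -> nat -> Prop) :
  (forall z, z \in s -> eventually (Q z)) ->
  eventually (fun n => forall z, z \in s -> Q z n).
Proof.
elim: s => [|a s IH] hs; first by exists 0%N.
have hs' z : z \in s -> eventually (Q z) by move=> zs; apply: hs; rewrite in_cons zs orbT.
have [N hN] := eventually_and (hs a (mem_head a s)) (IH hs').
by exists N => n /hN [Qa Qs] z; rewrite in_cons => /predU1P [->|] //; apply: Qs.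
Qed.

Lemma eventually_all_ltn (m : nat) (Q : nat -> nat -> Prop) :
  (forall i, (i < m)%N -> eventually (Q i)) ->
  eventually (fun n => forall i, (i < m)%N -> Q i n).
Proof.
move=> hQ; have [N hN] : eventually (fun n => forall i, i \in iota 0 m -> Q i n).
  by apply: eventually_all => i; rewrite mem_iota; exact: hQ.
by exists N => n /hN Qn i im; apply: Qn; rewrite mem_iota.
Qed.

Lemma frequently_mod_eq (f : nat -> nat) (p : nat) : (0 < p)%N ->
  exists2 q, (q < p)%N & frequently (fun k => (f k %% p)%N = q).
Proof.
move=> p0; apply: NNPP => nofreq.
have ev_neq q : (q < p)%N -> eventually (fun k => (f k %% p)%N <> q).
  move=> qp; apply: NNPP => noev; apply: nofreq; exists q => // N.
  by apply: NNPP => noN; apply: noev; exists N => k Nk fkq; apply: noN; exists k.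
have [N hN] := eventually_all_ltn ev_neq.
exact: hN N (leqnn N) _ (ltn_pmod _ p0) erefl.
Qed.

Lemma frequently_dvdn_exp2D (p : nat) : (0 < p)%N ->
  exists r, frequently (fun k => (p %| 2 ^ k + r)%N).
Proof.
move=> p0; have [q qp freq] := frequently_mod_eq (fun k => 2 ^ k)%N p0.
exists (p - q)%N => N; have [k Nk kq] := freq N; exists k => //.
by rewrite /dvdn -modnDml kq subnKC ?modnn // ltnW.
Qed.

Section InnerProduct.
Variables (R : realType) (H : lmodType R[i]) (ip : H -> H -> R[i]).
Hypothesis hip : inner_product_axioms ip.

Lemma ipC x y : ip x y = (ip y x)^*.
Proof. by case: hip => _ ipC _ _; exact: ipC. Qed.

Lemma ip_ge0 x : 0 <= ip x x.
Proof. by case: hip => _ _ ip_ge0 _; exact: ip_ge0. Qed.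

Lemma ip_eq0 x : ip x x = 0 -> x = 0.
Proof. by case: hip => _ _ _ ip_eq0; exact: ip_eq0. Qed.

Lemma ipDl x y z : ip (x + y) z = ip x z + ip y z.
Proof. by case: hip => ipDZl _ _ _; have := ipDZl 1 x y z; rewrite scale1r mul1r. Qed.

Lemma ip0l z : ip 0 z = 0.
Proof. by apply: (@addrI _ (ip 0 z)); rewrite -ipDl !addr0. Qed.

Lemma ipZl a x z : ip (a *: x) z = a * ip x z.
Proof. by case: hip => ipDZl _ _ _; rewrite -[a *: x]addr0 ipDZl ip0l addr0. Qed.

Lemma ipBl x y z : ip (x - y) z = ip x z - ip y z.
Proof. by rewrite ipDl -scaleN1r ipZl mulN1r. Qed.

Lemma ipDr x y z : ip z (x + y) = ip z x + ip z y.
Proof. by rewrite ipC ipDl rmorphD [ip z x]ipC [ip z y]ipC. Qed.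

Lemma ipZr a x z : ip z (a *: x) = a^* * ip z x.
Proof. by rewrite ipC ipZl rmorphM [ip z x]ipC. Qed.

Lemma ipBr x y z : ip z (x - y) = ip z x - ip z y.
Proof. by rewrite ipDr -scaleN1r ipZr rmorphN1 mulN1r. Qed.

Lemma ip_suml (I : Type) (r : seq I) (P : pred I) (F : I -> H) z :
  ip (\sum_(i <- r | P i) F i) z = \sum_(i <- r | P i) ip (F i) z.
Proof. by elim/big_rec2: _ => [|i x y _ <-]; rewrite ?ip0l ?ipDl. Qed.

Lemma ip_sumr (I : Type) (r : seq I) (P : pred I) (F : I -> H) z :
  ip z (\sum_(i <- r | P i) F i) = \sum_(i <- r | P i) ip z (F i).
Proof.
rewrite ipC ip_suml rmorph_sum; apply: eq_bigr => i _; exact/esym/ipC.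
Qed.

Lemma ip_extr x y : (forall z, ip z x = ip z y) -> x = y.
Proof. by move=> h; apply/eqP; rewrite -subr_eq0; apply/eqP/ip_eq0; rewrite ipBr h subrr. Qed.

Local Notation nrm := (hnorm ip).

Lemma hnorm_ge0 x : 0 <= nrm x.
Proof. by rewrite sqrtC_ge0 ip_ge0. Qed.

Lemma hnorm_sqr x : nrm x ^+ 2 = ip x x.
Proof. exact: sqrtCK. Qed.

Lemma hnorm_le x y : ip x x <= ip y y -> nrm x <= nrm y.
Proof. by rewrite /hnorm ler_sqrtC ?nnegrE ?ip_ge0. Qed.

Lemma cauchy_schwarz_sqr x y : `|ip x y| ^+ 2 <= ip x x * ip y y.
Proof.
have [yy0|yy_neq0] := eqVneq (ip y y) 0.
  by rewrite (ip_eq0 yy0) ipC !ip0l conjc0 normr0 expr0n /= mulr0.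
have yy_gt0 : 0 < ip y y by rewrite lt0r yy_neq0 ip_ge0.
have := ip_ge0 (x - (ip x y / ip y y) *: y).
rewrite ipBl !ipBr !ipZl !ipZr [ip y x]ipC rmorphM fmorphV /= (geC0_conj (ip_ge0 y)).
rewrite sqr_normc; set a := ip x x; set b := ip y y; set c := ip x y.
have -> : a - c^* / b * c - (c / b * c^* - c / b * (c^* / b * b)) =
          (a * b - c * c^*) / b by field; exact: yy_neq0.
by rewrite pmulr_lge0 ?invr_gt0 // subr_ge0.
Qed.

Lemma cauchy_schwarz x y : `|ip x y| <= nrm x * nrm y.
Proof.
by rewrite -ler_sqr ?nnegrE ?mulr_ge0 ?hnorm_ge0 // exprMn !hnorm_sqr cauchy_schwarz_sqr.
Qed.

Lemma pythagoras x y : ip x y = 0 -> ip (x + y) (x + y) = ip x x + ip y y.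
Proof. by move=> xy0; rewrite !ipDl !ipDr xy0 [ip y x]ipC xy0 conjc0 addr0 add0r. Qed.

End InnerProduct.

Section Fourier.
Variables (R : realType) (H : lmodType R[i]) (ip : H -> H -> R[i]).
Hypothesis hip : inner_product_axioms ip.

Definition fourier_sum (e : nat -> H) (n : nat) (x : H) : H :=
  \sum_(i < n) ip x (e i) *: e i.

Variable e : nat -> H.
Hypothesis e_orthonormal : forall i j : nat, ip (e i) (e j) = (i == j)%:R.

Lemma ip_fourier_residual_span n x (c : nat -> R[i]) :
  ip (x - fourier_sum e n x) (\sum_(i < n) c i *: e i) = 0.
Proof.
rewrite (ip_sumr hip); apply: big1 => j _; rewrite (ipZr hip) (ipBl hip).
rewrite (ip_suml hip) (bigD1 j) //= big1 => [|i]; rewrite (ipZl hip) e_orthonormal.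
  by rewrite eqxx mulr1 addr0 subrr mulr0.
by rewrite -val_eqE => /negbTE ->; rewrite mulr0.
Qed.

Lemma fourier_sum_best n x (c : nat -> R[i]) :
  ip (x - fourier_sum e n x) (x - fourier_sum e n x) <=
  ip (x - \sum_(i < n) c i *: e i) (x - \sum_(i < n) c i *: e i).
Proof.
have -> : x - \sum_(i < n) c i *: e i =
          (x - fourier_sum e n x) + \sum_(i < n) (ip x (e i) - c i) *: e i.
  by rewrite /fourier_sum (eq_bigr _ (fun i _ => scalerBl _ _ _)) sumrB addrA subrK.
have orth := ip_fourier_residual_span n x (fun i => ip x (e i) - c i).
by rewrite (pythagoras hip orth) lerDl ip_ge0.
Qed.

Lemma bessel n x : ip (fourier_sum e n x) (fourier_sum e n x) <= ip x x.
Proof.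
have orth : ip (x - fourier_sum e n x) (fourier_sum e n x) = 0 :=
  ip_fourier_residual_span n x (fun i => ip x (e i)).
rewrite -{3 4}[x](subrK (fourier_sum e n x)).
by rewrite (pythagoras hip orth) lerDr ip_ge0.
Qed.

End Fourier.

Lemma fourier_sum_cvg (R : realType) (H : lmodType R[i]) (ip : H -> H -> R[i])
    (e : nat -> H) : inner_product_axioms ip -> orthonormal_basis ip e ->
  forall x eps, 0 < eps -> eventually (fun n => hnorm ip (x - fourier_sum ip e n x) < eps).
Proof.
move=> hip [e_orth e_dense] x eps eps0; have [m [c xc]] := e_dense x eps eps0.
exists m => n mn; apply: le_lt_trans xc; apply: hnorm_le => //.
have -> : \sum_(i < m) c i *: e i = \sum_(i < n) (if (i < m)%N then c i else 0) *: e i.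
  rewrite (big_ord_widen n (fun i => c i *: e i) mn) big_mkcond.
  by apply: eq_bigr => i _; case: ifP; rewrite ?scale0r.
exact: (fourier_sum_best hip e_orth n x (fun i => if (i < m)%N then c i else 0)).
Qed.

Section Operators.
Variables (R : realType) (H : lmodType R[i]) (ip : H -> H -> R[i]).
Hypothesis hip : inner_product_axioms ip.
Local Notation nrm := (hnorm ip).

Definition linear_map (T : H -> H) : Prop :=
  forall (a : R[i]) (x y : H), T (a *: x + y) = a *: T x + T y.

Lemma linear_map_sum T n (c : nat -> R[i]) (v : nat -> H) : linear_map T ->
  T (\sum_(i < n) c i *: v i) = \sum_(i < n) c i *: T (v i).
Proof.
move=> linT; have T0 : T 0 = 0.
  have := linT 1 0 0; rewrite scaler0 addr0 scale1r => T0D.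
  by apply: (@addrI _ (T 0)); rewrite addr0 -T0D.
elim: n => [|n IH]; first by rewrite !big_ord0.
by rewrite !big_ord_recr /= addrC linT IH addrC.
Qed.

Lemma operator_bound_ge0 T : (exists M, forall x, nrm (T x) <= M * nrm x) ->
  exists2 M, 0 <= M & forall x, nrm (T x) <= M * nrm x.
Proof.
move=> [M bdT]; exists `|M| => // x.
have Mx_ge0 : 0 <= M * nrm x := le_trans (hnorm_ge0 hip _) (bdT x).
by rewrite -(ger0_norm (hnorm_ge0 hip x)) -normrM ger0_norm.
Qed.

Lemma bounded_linear_comp T U :
  bounded_linear ip T -> bounded_linear ip U -> bounded_linear ip (T \o U).
Proof.
move=> [linT /operator_bound_ge0 [M M0 bdT]] [linU /operator_bound_ge0 [N _ bdU]].
split=> [a x y|]; first by rewrite /= linU linT.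
by exists (M * N) => x; apply: le_trans (bdT _) _; rewrite -mulrA ler_wpM2l.
Qed.

Definition isometry_with_adjoint (V Vs : H -> H) : Prop :=
  is_adjoint ip V Vs /\ forall x y, ip (V x) (V y) = ip x y.

Lemma isometry_with_adjoint_comp V Vs U Us :
  isometry_with_adjoint V Vs -> isometry_with_adjoint U Us ->
  isometry_with_adjoint (V \o U) (Us \o Vs).
Proof.
by move=> [adjV isoV] [adjU isoU]; split=> x y /=; [rewrite adjV adjU | rewrite isoV isoU].
Qed.

Section Adjoint.
Variables V Vs : H -> H.
Hypothesis hV : isometry_with_adjoint V Vs.

Lemma adjoint_isometryK x : Vs (V x) = x.
Proof. by case: hV => adjV isoV; apply: (ip_extr hip) => z; rewrite -adjV isoV. Qed.

Lemma adjoint_linear : linear_map Vs.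
Proof.
case: hV => adjV _ a x y; apply: (ip_extr hip) => z.
by rewrite -adjV (ipDr hip) (ipZr hip) (ipDr hip) (ipZr hip) -!adjV.
Qed.

Lemma adjoint_contraction u : nrm (Vs u) <= nrm u.
Proof.
case: hV => adjV isoV.
have [->|Vsu_neq0] := eqVneq (nrm (Vs u)) 0; first exact: hnorm_ge0.
have Vsu_gt0 : 0 < nrm (Vs u) by rewrite lt0r Vsu_neq0 hnorm_ge0.
rewrite -(ler_pM2l Vsu_gt0) -expr2.
have VVsu_ge0 : 0 <= ip (V (Vs u)) u by rewrite adjV ip_ge0.
rewrite hnorm_sqr -adjV -(ger0_norm VVsu_ge0).
by apply: le_trans (cauchy_schwarz hip _ _) _; rewrite /hnorm isoV.
Qed.

Lemma adjoint_bounded_linear : bounded_linear ip Vs.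
Proof.
split; first exact: adjoint_linear.
by exists 1 => u; rewrite mul1r adjoint_contraction.
Qed.

End Adjoint.
End Operators.

Section Compression.
Variables (R : realType) (H : lmodType R[i]) (ip : H -> H -> R[i]).
Hypothesis hip : inner_product_axioms ip.
Local Notation nrm := (hnorm ip).

Definition compression (T : H -> H) (h g : nat -> H) (N : nat) : H -> H :=
  fun x => \sum_(b < N) \sum_(a < N) ip (T (h b)) (g a) *: rank_one ip (g a) (h b) x.

Lemma ip_compression T h g N x y : linear_map T ->
  ip (compression T h g N x) y = ip (T (fourier_sum ip h N x)) (fourier_sum ip g N y).
Proof.
move=> linT; rewrite /compression /fourier_sum.
rewrite (linear_map_sum N (fun b => ip x (h b)) h linT) !(ip_suml hip).
apply: eq_bigr => b _; rewrite (ipZl hip) (ip_sumr hip) (ip_suml hip) mulr_sumr.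
apply: eq_bigr => a _; rewrite /rank_one !(ipZl hip) (ipZr hip) [ip (g a) y](ipC hip).
by rewrite mulrCA [ip (T _) _ * _]mulrC.
Qed.

Lemma ip_fourier_sum_approx h g T x y :
    orthonormal_basis ip h -> orthonormal_basis ip g -> bounded_linear ip T ->
  forall eps, 0 < eps -> eventually (fun N =>
    `|ip (T x) y - ip (T (fourier_sum ip h N x)) (fourier_sum ip g N y)| < eps).
Proof.
move=> hh hg [linT /(operator_bound_ge0 hip) [M M0 bdT]] eps eps0.
have tol_gt0 K : 0 <= K -> 0 < eps / 2 / (K + 1) by move=> K0; rewrite !divr_gt0 ?ltr_wpDl.
have Kx_ge0 : 0 <= M * nrm x by rewrite mulr_ge0 ?hnorm_ge0.
have Ky_ge0 : 0 <= M * nrm y by rewrite mulr_ge0 ?hnorm_ge0.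
have [N0 hN0] := eventually_and (fourier_sum_cvg hip hh x (tol_gt0 _ Ky_ge0))
                                (fourier_sum_cvg hip hg y (tol_gt0 _ Kx_ge0)).
exists N0 => N /hN0 [xN yN]; set xr := x - _ in xN; set yr := y - _ in yN.
have -> : ip (T x) y - ip (T (fourier_sum ip h N x)) (fourier_sum ip g N y) =
          ip (T xr) y + ip (T (fourier_sum ip h N x)) yr.
  have TB : T xr = T x - T (fourier_sum ip h N x).
    by rewrite /xr addrC -scaleN1r linT scaleN1r addrC.
  by rewrite TB (ipBl hip) (ipBr hip) addrA subrK.
rewrite (splitr eps); apply: le_lt_trans (ler_normD _ _) _.
apply: ltrD; apply: le_lt_trans (cauchy_schwarz hip _ _) _.
  apply: le_lt_trans (mulr_lt_of_lt_divD1 (hnorm_ge0 hip _) Ky_ge0 xN).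
  by rewrite mulrA [_ * M]mulrC ler_wpM2r ?hnorm_ge0.
apply: le_lt_trans (mulr_lt_of_lt_divD1 (hnorm_ge0 hip _) Kx_ge0 yN).
rewrite mulrC ler_wpM2l ?hnorm_ge0 //; apply: le_trans (bdT _) _.
by rewrite ler_wpM2l // hnorm_le // (bessel hip hh.1).
Qed.

Definition wot_adherent (A : (H -> H) -> Prop) (T : H -> H) : Prop :=
  forall (s : seq (H * H)) (e : R[i]), 0 < e ->
    exists S : H -> H, A S /\
      forall xy : H * H, xy \in s -> `|ip (T xy.1) xy.2 - ip (S xy.1) xy.2| < e.

Lemma wot_adherent_compression h g T :
    orthonormal_basis ip h -> orthonormal_basis ip g -> bounded_linear ip T ->
  wot_adherent (fun S => exists N, S = compression T h g N) T.
Proof.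
move=> hh hg hT s e e0.
have [N hN] : eventually (fun N => forall xy, xy \in s -> `|ip (T xy.1) xy.2 -
    ip (T (fourier_sum ip h N xy.1)) (fourier_sum ip g N xy.2)| < e).
  by apply: eventually_all => xy _; exact: ip_fourier_sum_approx.
exists (compression T h g N); split=> [|xy xys]; first by exists N.
by rewrite ip_compression; [exact: hN | case: hT].
Qed.

Lemma wot_adherent_idem A T : wot_adherent (wot_adherent A) T -> wot_adherent A T.
Proof.
move=> hT s e e0; have e2 : 0 < e / 2 by rewrite divr_gt0.
have [S [hS TS]] := hT s _ e2; have [U [AU SU]] := hS s _ e2.
exists U; split=> // xy xys; rewrite (splitr e).
exact: le_lt_trans (ler_distD _ _ _) (ltrD (TS xy xys) (SU xy xys)).
Qed.

Lemma wot_adherent_comp_r (A B : (H -> H) -> Prop) T V :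
  wot_adherent A T -> (forall S, A S -> B (S \o V)) -> wot_adherent B (T \o V).
Proof.
move=> hT AB s e e0; have [S [AS TS]] := hT [seq (V xy.1, xy.2) | xy <- s] e e0.
exists (S \o V); split=> [|xy xys]; first exact: AB.
exact: TS (map_f _ xys).
Qed.

Lemma wot_adherent_of_frequently A (S : nat -> H -> H) L :
  wot_converges ip S L -> frequently (fun k => A (S k)) -> wot_adherent A L.
Proof.
move=> SL freq s e e0.
have [K hK] : eventually (fun k => forall xy, xy \in s ->
    `|ip (S k xy.1) xy.2 - ip (L xy.1) xy.2| < e).
  by apply: eventually_all => xy _; exact: SL.
have [k Kk ASk] := freq K; exists (S k); split=> // xy xys.
by rewrite distrC; exact: hK.
Qed.

Section LinearSubspace.
Variable A : (H -> H) -> Prop.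
Hypotheses (A0 : A (fun _ => 0))
  (AD : forall S U, A S -> A U -> A (fun x => S x + U x))
  (AZ : forall c S, A S -> A (fun x => c *: S x)).

Lemma wot_adherent_add T U :
  wot_adherent A T -> wot_adherent A U -> wot_adherent A (fun x => T x + U x).
Proof.
move=> hT hU s e e0; have e2 : 0 < e / 2 by rewrite divr_gt0.
have [S [AS TS]] := hT s _ e2; have [S' [AS' US']] := hU s _ e2.
exists (fun x => S x + S' x); split=> [|xy xys]; first exact: AD.
rewrite !(ipDl hip) opprD addrACA (splitr e).
exact: le_lt_trans (ler_normD _ _) (ltrD (TS xy xys) (US' xy xys)).
Qed.

Lemma wot_adherent_scale c T :
  wot_adherent A T -> wot_adherent A (fun x => c *: T x).
Proof.
move=> hT s e e0; have tol_gt0 : 0 < e / (`|c| + 1) by rewrite divr_gt0 ?ltr_wpDl.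
have [S [AS TS]] := hT s _ tol_gt0.
exists (fun x => c *: S x); split=> [|xy xys]; first exact: AZ.
rewrite !(ipZl hip) -mulrBr normrM mulrC.
exact: mulr_lt_of_lt_divD1 (TS xy xys).
Qed.

Lemma wot_adherent_sum n (F : 'I_n -> H -> H) :
  (forall i, wot_adherent A (F i)) -> wot_adherent A (fun x => \sum_(i < n) F i x).
Proof.
elim: n F => [|n IH] F hF.
  move=> s e e0; exists (fun _ => 0); split=> // xy _.
  by rewrite big_ord0 subrr normr0.
have -> : (fun x => \sum_(i < n.+1) F i x) =
          (fun x => F ord0 x + \sum_(i < n) F (lift ord0 i) x).
  by apply: functional_extensionality => x; rewrite big_ord_recl.
by apply: wot_adherent_add => //; apply: IH.
Qed.

Lemma wot_adherent_compression_comp T h g N V :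
  (forall a b, wot_adherent A (rank_one ip (g a) (h b) \o V)) ->
  wot_adherent A (compression T h g N \o V).
Proof.
move=> h_rank_one; apply: wot_adherent_sum => b; apply: wot_adherent_sum => a.
exact: wot_adherent_scale _ (h_rank_one a b).
Qed.

End LinearSubspace.
End Compression.

Section OpSpan.
Variables (R : realType) (H : lmodType R[i]).
Implicit Types (G : (H -> H) -> Prop) (S U : H -> H).

Lemma op_span0 G : op_span G (fun _ => 0).
Proof.
exists [::], (fun _ => 0); split=> //.
by apply: functional_extensionality => x; rewrite big_ord0.
Qed.

Lemma op_spanZ G (a : R[i]) S : op_span G S -> op_span G (fun x => a *: S x).
Proof.
move=> [s [c [Gs ->]]]; exists s, (fun i => a * c i); split=> //.
apply: functional_extensionality => x; rewrite scaler_sumr.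
by apply: eq_bigr => i _; rewrite scalerA.
Qed.

Lemma op_spanD G S U : op_span G S -> op_span G U -> op_span G (fun x => S x + U x).
Proof.
move=> [s [c [Gs ->]]] [t [d [Gt ->]]].
exists (s ++ t), (fun i => if (i < size s)%N then c i else d (i - size s)%N); split.
  move=> i; rewrite size_cat nth_cat; case: ifP => [/[swap] _|/negbT]; first exact: Gs.
  by rewrite -leqNgt => si; rewrite -ltn_subLR //; exact: Gt.
apply: functional_extensionality => x; rewrite size_cat big_split_ord /=.
congr (_ + _); apply: eq_bigr => i _; rewrite nth_cat.
  by rewrite ltn_ord.
by rewrite ltnNge leq_addr /= addKn.
Qed.

Lemma op_span_comp_r G (G' : (H -> H) -> Prop) S V :
  op_span G S -> (forall U, G U -> G' (U \o V)) -> op_span G' (S \o V).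
Proof.
move=> [s [c [Gs ->]]] GG'; exists [seq U \o V | U <- s], c; split.
  by move=> i; rewrite size_map => si; rewrite (nth_map id) //; exact/GG'/Gs.
apply: functional_extensionality => x /=; rewrite size_map.
by apply: eq_bigr => i _; rewrite (nth_map id).
Qed.

End OpSpan.

Section Words.
Variables (R : realType) (H : lmodType R[i]) (Z1 Z2 : H -> H).

Definition words_of_size (n : nat) (A : H -> H) : Prop :=
  exists mu : seq bool, size mu = n /\ A = Zword Z1 Z2 mu.

Lemma Zword_cat v w x : Zword Z1 Z2 (v ++ w) x = Zword Z1 Z2 v (Zword Z1 Z2 w x).
Proof. by elim: v => //= b v IH; rewrite /Zword /= -/(Zword Z1 Z2 _) IH. Qed.

Lemma Zword_products p m w : size w = (m.+1 * p)%N ->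
  op_products (words_of_size p) (Zword Z1 Z2 w).
Proof.
elim: m w => [|m IH] w sw.
  exists [:: Zword Z1 Z2 w]; split=> //; split=> // [[|//] _].
  by exists w; rewrite sw mul1n.
have [|s [_ [Gs Es]]] := IH (drop p w); first by rewrite size_drop sw mulSn addKn.
exists (Zword Z1 Z2 (take p w) :: s); split=> //; split=> [[|i] /= si|].
- by exists (take p w); rewrite size_takel // sw mulSn leq_addr.
- exact: Gs.
- apply: functional_extensionality => x /=.
  by rewrite -{1}(cat_take_drop p w) Zword_cat Es.
Qed.

Lemma op_span_words_comp p m v S : (0 < p)%N -> (0 < m + size v)%N ->
    (p %| m + size v)%N -> op_span (words_of_size m) S ->
  gen_algebra (words_of_size p) (S \o Zword Z1 Z2 v).
Proof.
move=> p0 mv0 dvd_mv spanS; apply: (op_span_comp_r spanS) => _ [w [sw ->]].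
have -> : Zword Z1 Z2 w \o Zword Z1 Z2 v = Zword Z1 Z2 (w ++ v).
  by apply: functional_extensionality => x; rewrite Zword_cat.
apply: (@Zword_products _ ((m + size v) %/ p).-1).
by rewrite size_cat sw prednK ?divnK // divn_gt0 // dvdn_leq.
Qed.

Lemma Zword_nseq_isometry (ip : H -> H -> R[i]) Z1s r :
    isometry_with_adjoint ip Z1 Z1s ->
  exists Vs, isometry_with_adjoint ip (Zword Z1 Z2 (nseq r false)) Vs.
Proof.
move=> hZ1; elim: r => [|r [Vs hV]]; first by exists id.
by exists (Vs \o Z1s); exact: isometry_with_adjoint_comp hZ1 hV.
Qed.

End Words.

Theorem proposition3p1 (R : realType) (H : lmodType R[i]) (ip : H -> H -> R[i])
  (hH : hilbert_space ip) (hsep : separable ip) (hinf : infinite_dimensional H)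
  (Z1 Z2 : H -> H) (hZ : read_isometries ip Z1 Z2)
  (p : nat) (hp : (0 < p)%N) :
  forall T : H -> H,
    wot_closure ip
      (gen_algebra (fun A => exists mu : seq bool, size mu = p /\ A = Zword Z1 Z2 mu)) T
    <-> bounded_linear ip T.
Proof.
move=> T; split=> [[] //|hT]; split=> //.
have hip : inner_product_axioms ip by case: hH.
case: hZ => [[_ isoZ1] [_ [[Z1s [_ [adjZ1 _]]] [h [g [S [hh [hg [spanS cvgS]]]]]]]]].
have [r freq_r] := frequently_dvdn_exp2D hp.
pose V := Zword Z1 Z2 (nseq r false).
have [Vs hV] := Zword_nseq_isometry Z2 r (conj adjZ1 isoZ1 : isometry_with_adjoint ip Z1 Z1s).
have -> : T = (T \o Vs) \o V.
  by apply: functional_extensionality => x /=; rewrite (adjoint_isometryK hip hV).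
apply/wot_adherent_idem/(wot_adherent_comp_r (wot_adherent_compression hip hh hg
  (bounded_linear_comp hip hT (adjoint_bounded_linear hip hV)))) => _ [N ->].
apply: wot_adherent_compression_comp => //.
- exact: op_span0.
- by move=> ? ?; exact: op_spanD.
- by move=> ? ?; exact: op_spanZ.
move=> a b; apply: (wot_adherent_of_frequently (S := fun k => S a b k \o V)).
  by move=> x y; exact: cvgS.
move=> K; have [k Kk dvd_k] := freq_r K; exists k => //.
by apply: op_span_words_comp (spanS a b k) => //; rewrite size_nseq // addn_gt0 expn_gt0.
Qed.
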